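(* $18,19\notin\operatorname{Spec}(32_{65})$.
   Context: $32_{65}$ is the finite integral symmetric relation algebra with atoms $1'$, $a$, $b$, $c$, all symmetric, in which a diversity cycle $xyz$ (with $x,y,z\in\{a,b,c\}$) is mandatory (i.e. $x;y\ge z$) if it involves $a$ and forbidden (i.e. $x;y\cdot z=0$) otherwise. A representation over a set $U$ is an embedding into the full relation algebra on $U\times U$. $\operatorname{Spec}(A)$ is the set of cardinals $\alpha\le\omega$ such that $A$ has a representation over a set of cardinality $\alpha$. *)

From mathcomp Require Import all_boot.
Set Implicit Arguments. Unset Strict Implicit. Unset Printing Implicit Defensive.

(* Atoms are indexed by 'I_4 :  0 = 1' (identity), 1 = a, 2 = b, 3 = c.
   Elements of the algebra are the sets of atoms, {set 'I_4}. *)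
Definition at_id : 'I_4 := @Ordinal 4 0 isT.
Definition at_a  : 'I_4 := @Ordinal 4 1 isT.
Definition at_b  : 'I_4 := @Ordinal 4 2 isT.
Definition at_c  : 'I_4 := @Ordinal 4 3 isT.

Definition conv_atom (x : 'I_4) : 'I_4 := x.

(* cyc x y z  <->  x;y >= z  (consistency of the triple / cycle). *)
Definition cyc (x y z : 'I_4) : bool :=
  if x == at_id then z == y
  else if y == at_id then z == x
  else if z == at_id then y == conv_atom x
  else [|| x == at_a, y == at_a | z == at_a].

Definition ra_one : {set 'I_4} := [set at_id].
Definition ra_conv (X : {set 'I_4}) : {set 'I_4} := [set conv_atom x | x in X].
Definition ra_comp (X Y : {set 'I_4}) : {set 'I_4} :=
  [set z | [exists x in X, exists y in Y, cyc x y z]].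

Definition rel_comp (U : finType) (R S : {set U * U}) : {set U * U} :=
  [set p | [exists w, ((p.1, w) \in R) && ((w, p.2) \in S)]].
Definition rel_conv (U : finType) (R : {set U * U}) : {set U * U} :=
  [set p | (p.2, p.1) \in R].
Definition rel_id (U : finType) : {set U * U} := [set p | p.1 == p.2].

Definition representation (U : finType) (h : {set 'I_4} -> {set U * U}) : Prop :=
  injective h /\
  (forall X Y, h (X :|: Y) = h X :|: h Y) /\
  (forall X, h (~: X) = ~: h X) /\
  (forall X Y, h (ra_comp X Y) = rel_comp (h X) (h Y)) /\
  (forall X, h (ra_conv X) = rel_conv (h X)) /\
  h ra_one = rel_id U.

Definition in_spec (n : nat) : Prop :=
  exists (U : finType) (h : {set 'I_4} -> {set U * U}), #|U| = n /\ representation h.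

From mathcomp Require Import all_boot zify.
Set Implicit Arguments. Unset Strict Implicit. Unset Printing Implicit Defensive.

(* Idea: in a representation call two points adjacent when they are related
   by b + c.  As every diversity cycle avoiding a is forbidden, this graph is
   triangle-free; 1' <= (b + c);(b + c) gives every point a neighbour;
   b, c <= a;a gives each edge a point a-related to both of its ends; and
   a <= b;b, c;c, b;c, c;b gives any two a-related points four distinct
   common neighbours.  Counting common neighbours along an induced path
   v - u - x - w then bounds every degree below by 8, and the number of
   points by 8 + 8 + 4 = 20. *)

Lemma cardsU_disjoint (T : finType) (A B : {set T}) :
  [disjoint A & B] -> #|A :|: B| = #|A| + #|B|.
Proof. by move=> /disjoint_setI0 AB0; rewrite -cardsUI AB0 cards0 addn0. Qed.

Section CommonNeighbours.
Variables (T : finType) (adj : rel T) (k : nat).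

Definition nbhd x := [set y | adj x y].
Definition common x y := nbhd x :&: nbhd y.
Definition far x y := (x != y) && ~~ adj x y.

Hypothesis adj_sym : symmetric adj.
Hypothesis adj_triangle_free : forall x y z, adj x y -> adj y z -> ~~ adj x z.
Hypothesis edge_far_apex : forall u v, adj u v -> exists2 w, far u w & far w v.
Hypothesis far_common : forall x y, far x y -> k <= #|common x y|.

Lemma far_sym x y : far x y = far y x.
Proof. by rewrite /far eq_sym adj_sym. Qed.

Lemma edge_path u v : 0 < k -> adj u v ->
  exists w x, [/\ far w v, adj w x, adj x u & far x v].
Proof.
move=> k_gt0 uv; have [w uw wv] := edge_far_apex uv.
have : 0 < #|common w u| by apply: leq_trans k_gt0 (far_common _); rewrite far_sym.
case/card_gt0P => x; rewrite !inE => /andP[wx ux].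
have xu : adj x u by rewrite adj_sym.
exists w, x; split=> //; rewrite /far (adj_triangle_free xu uv) andbT.
by apply: contraTneq wx => ->; case/andP: wv.
Qed.

Lemma card_nbhd u v : adj u v -> k + k <= #|nbhd v|.
Proof.
move=> uv; have [-> // | k_gt0] := posnP k.
have [w [x [wv wx xu xv]]] := edge_path k_gt0 uv.
have disj : [disjoint common w v & common x v].
  rewrite disjoint_subset; apply/subsetP => y; rewrite !inE => /andP[wy _].
  by rewrite negb_and (contraL (adj_triangle_free wx) wy).
apply: leq_trans (leq_add (far_common wv) (far_common xv)) _.
rewrite -cardsU_disjoint //; apply: subset_leq_card.
by apply/subsetP => y; rewrite !inE => /orP[] /andP[_ ->].
Qed.

Lemma card_ge_5k u v : adj u v -> 5 * k <= #|T|.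
Proof.
move=> uv; have [-> // | k_gt0] := posnP k.
have [w [x [wv wx xu xv]]] := edge_path k_gt0 uv.
have disj_xu : [disjoint nbhd x & nbhd u].
  rewrite disjoint_subset; apply/subsetP => y; rewrite !inE.
  exact: contraL (adj_triangle_free xu).
have disj_wv : [disjoint nbhd x :|: nbhd u & common w v].
  rewrite disjoint_subset; apply/subsetP => y; rewrite !inE negb_and.
  case/orP => [xy | uy].
  - by rewrite (adj_triangle_free wx xy).
  - by rewrite (contraL (adj_triangle_free uv) uy) orbT.
have := max_card (mem (nbhd x :|: nbhd u :|: common w v)).
rewrite !cardsU_disjoint //.
have nbhd_x : k + k <= #|nbhd x| by apply: (card_nbhd (u := u)); rewrite adj_sym.
have nbhd_u : k + k <= #|nbhd u| by apply: (card_nbhd (u := v)); rewrite adj_sym.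
have := far_common wv; lia.
Qed.

End CommonNeighbours.

Definition ra_bc : {set 'I_4} := [set at_b; at_c].

Lemma ra_conv_id (X : {set 'I_4}) : ra_conv X = X.
Proof. exact: imset_id. Qed.

Lemma ra_compP (X Y : {set 'I_4}) z :
  reflect (exists2 x, x \in X & exists2 y, y \in Y & cyc x y z) (z \in ra_comp X Y).
Proof.
rewrite inE; apply: (iffP existsP).
  by case=> x /andP[xX /existsP[y /andP[yY xyz]]]; exists x => //; exists y.
case=> x xX [y yY xyz].
by exists x; rewrite xX; apply/existsP; exists y; rewrite yY.
Qed.

Lemma ra_bc_comp_disjoint : [disjoint ra_comp ra_bc ra_bc & ra_bc].
Proof.
rewrite disjoint_subset; apply/subsetP => z /ra_compP[x + [y +]].
by rewrite !inE => /orP[]/eqP-> /orP[]/eqP->; case: z => -[|[|[|[|]]]].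
Qed.

Lemma ra_one_sub_bc_comp : ra_one \subset ra_comp ra_bc ra_bc.
Proof.
rewrite sub1set; apply/ra_compP.
by exists at_b; rewrite ?inE ?eqxx //; exists at_b; rewrite ?inE ?eqxx.
Qed.

Lemma ra_bc_sub_a_comp : ra_bc \subset ra_comp [set at_a] [set at_a].
Proof.
apply/subsetP => z z_bc; apply/ra_compP.
exists at_a; rewrite ?inE //; exists at_a; rewrite ?inE //.
by move: z_bc; rewrite !inE => /orP[]/eqP->.
Qed.

Lemma ra_a_sub_comp p q :
  p \in ra_bc -> q \in ra_bc -> [set at_a] \subset ra_comp [set p] [set q].
Proof.
move=> p_bc q_bc; rewrite sub1set; apply/ra_compP.
exists p; rewrite ?inE //; exists q; rewrite ?inE //.
by move: p_bc q_bc; rewrite !inE => /orP[]/eqP-> /orP[]/eqP->.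
Qed.

Lemma ra_a_compl : [set at_a] = ~: (ra_one :|: ra_bc).
Proof. by apply/setP => z; rewrite !inE; case: z => -[|[|[|[|]]]]. Qed.

Section Homomorphism.
Variables (U : finType) (h : {set 'I_4} -> {set U * U}).
Implicit Types X Y : {set 'I_4}.
Hypothesis h_setU : forall X Y, h (X :|: Y) = h X :|: h Y.
Hypothesis h_setC : forall X, h (~: X) = ~: h X.
Hypothesis h_comp : forall X Y, h (ra_comp X Y) = rel_comp (h X) (h Y).
Hypothesis h_conv : forall X, h (ra_conv X) = rel_conv (h X).
Hypothesis h_one : h ra_one = rel_id U.

Lemma h_set0 : h set0 = set0.
Proof.
have h_setT : h setT = setT by rewrite -(setUCr set0) h_setU h_setC setUCr.
by rewrite -setCT h_setC h_setT setCT.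
Qed.

Lemma h_subset X Y : X \subset Y -> h X \subset h Y.
Proof. by move/setUidPr <-; rewrite h_setU subsetUl. Qed.

Lemma h_setI X Y : h (X :&: Y) = h X :&: h Y.
Proof. by rewrite -[X :&: Y]setCK setCI h_setC h_setU !h_setC setCU !setCK. Qed.

Lemma h_disjoint X Y : [disjoint X & Y] -> [disjoint h X & h Y].
Proof. by rewrite -!setI_eq0 -h_setI => /eqP->; rewrite h_set0. Qed.

Lemma h_compP X Y x y :
  reflect (exists2 w, (x, w) \in h X & (w, y) \in h Y) ((x, y) \in h (ra_comp X Y)).
Proof.
rewrite h_comp inE; apply: (iffP existsP) => [[w /andP[]] | [w xw wy]]; first by exists w.
by exists w; rewrite xw.
Qed.

Lemma h_atom_inj p q x y : (x, y) \in h [set p] -> (x, y) \in h [set q] -> p = q.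
Proof.
move=> xy_p xy_q; apply/eqP; apply: contraT => pq.
have /h_disjoint/disjointFr/(_ xy_p) : [disjoint [set p] & [set q]].
  by rewrite disjoints1 inE.
by rewrite xy_q.
Qed.

Definition bc_adj : rel U := fun x y => (x, y) \in h ra_bc.

Lemma bc_adj_sym : symmetric bc_adj.
Proof. by move=> x y; rewrite /bc_adj -{1}(ra_conv_id ra_bc) h_conv inE. Qed.

Lemma bc_adj_triangle_free x y z : bc_adj x y -> bc_adj y z -> ~~ bc_adj x z.
Proof.
move=> xy yz; have xz : (x, z) \in h (ra_comp ra_bc ra_bc) by apply/h_compP; exists y.
by rewrite /bc_adj (disjointFr (h_disjoint ra_bc_comp_disjoint) xz).
Qed.

Lemma bc_adj_nbr x : exists y, bc_adj x y.
Proof.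
have : (x, x) \in h (ra_comp ra_bc ra_bc).
  by apply: subsetP (h_subset ra_one_sub_bc_comp) _ _; rewrite h_one inE.
by case/h_compP => y; exists y.
Qed.

Lemma h_atom_bc_adj p x y : p \in ra_bc -> (x, y) \in h [set p] -> bc_adj x y.
Proof. by rewrite -sub1set => /h_subset/subsetP; apply. Qed.

Lemma h_a_far x y : ((x, y) \in h [set at_a]) = far bc_adj x y.
Proof. by rewrite ra_a_compl h_setC h_setU h_one !inE negb_or. Qed.

Lemma bc_edge_far_apex u v : bc_adj u v -> exists2 w, far bc_adj u w & far bc_adj w v.
Proof.
move=> uv; have /h_compP[w] := subsetP (h_subset ra_bc_sub_a_comp) _ uv.
by rewrite !h_a_far; exists w.
Qed.

Lemma bc_far_common x y : far bc_adj x y -> 4 <= #|common bc_adj x y|.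
Proof.
rewrite -h_a_far => xy_a.
pose D := setX ra_bc ra_bc.
pose through pq w := ((x, w) \in h [set pq.1]) && ((w, y) \in h [set pq.2]).
have through_ex pq : pq \in D -> exists w, through pq w.
  case: pq => p q; rewrite in_setX => /andP[p_bc q_bc].
  have /h_compP[w xw wy] := subsetP (h_subset (ra_a_sub_comp p_bc q_bc)) _ xy_a.
  by exists w; apply/andP.
pose mid pq := odflt x [pick w | through pq w].
have midP pq : pq \in D -> through pq (mid pq).
  case/through_ex => w pqw; rewrite /mid; case: pickP => [// | none].
  by rewrite none in pqw.
have mid_inj : {in D &, injective mid}.
  move=> [p q] [p' q'] /midP/andP[xp qy] /midP/andP[xp' q'y] /= eq_mid.
  rewrite -eq_mid in xp' q'y.
  by congr (_, _); [exact: h_atom_inj xp xp' | exact: h_atom_inj qy q'y].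
have <- : #|D| = 4 by rewrite cardsX cards2.
rewrite -(card_in_imset mid_inj); apply: subset_leq_card.
apply/subsetP => _ /imsetP[[p q] pq_D ->]; have /andP[xm my] := midP _ pq_D.
move: pq_D; rewrite in_setX => /andP[p_bc q_bc].
by rewrite !inE (h_atom_bc_adj p_bc xm) bc_adj_sym (h_atom_bc_adj q_bc my).
Qed.

Lemma hom_card_ge20 (u : U) : 20 <= #|U|.
Proof.
have [v uv] := bc_adj_nbr u.
have := card_ge_5k bc_adj_sym bc_adj_triangle_free bc_edge_far_apex bc_far_common uv.
by [].
Qed.

End Homomorphism.

Lemma representation_card_ge20 (U : finType) (h : {set 'I_4} -> {set U * U}) (u : U) :
  representation h -> 20 <= #|U|.
Proof. by case=> _ [h_setU [h_setC [h_comp [h_conv h_one]]]]; apply: hom_card_ge20 u. Qed.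

Theorem mainTheorem12 : ~ in_spec 18 /\ ~ in_spec 19.
Proof.
have not_in_spec n : 0 < n < 20 -> ~ in_spec n.
  case/andP=> n_gt0 n_lt20 [U [h [cardU h_rep]]].
  move: n_gt0; rewrite -cardU => /card_gt0P[u _].
  by have := representation_card_ge20 u h_rep; rewrite cardU leqNgt n_lt20.
by split; apply: not_in_spec.
Qed.
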